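(* Let $c^1,\dots,c^n$ be a lattice basis of $\mathbb{Z}^n$, $K=\{x\in\mathbb{R}^n: c^ix\ge0,\ i=1,\dots,n\}$, and $\bar x\in K\cap\mathbb{Z}^n\setminus\{0\}$. Then $$Q(\bar x)=\Big\{x\in\mathbb{R}^n:\ c^ix\ge0\ (i=1,\dots,n),\ \ \sum_{i=1}^k d^k_i c^ix\ge\sum_{i=1}^k d^k_i c^i\bar x\ (k=1,\dots,n)\Big\}.$$
   Context: A lattice basis of $\mathbb{Z}^n$ is a set of $n$ linearly independent vectors $c^1,\dots,c^n\in\mathbb{Z}^n$ such that every $v\in\mathbb{Z}^n$ equals $\sum_i\lambda_ic^i$ with all $\lambda_i\in\mathbb{Z}$. Lexicographic order: $x\prec y$ iff $x\ne y$ and $c^ix<c^iy$ for the smallest index $i$ with $c^ix\ne c^iy$. $Q(\bar x):=\operatorname{conv}\{x\in K\cap\mathbb{Z}^n: x\succeq\bar x\}$. For $k\in\{1,\dots,n\}$, $i\in\{1,\dots,k\}$: $d^k_k=1$; $d^k_{k-1}=c^k\bar x$ (if $k\ge2$); $d^k_i=c^k\bar x\prod_{j=i+1}^{k-1}(c^j\bar x+1)$ for $i\le k-2$. The inequality $\sum_{i=1}^k d^k_ic^ix\ge\sum_{i=1}^k d^k_ic^i\bar x$ is the $k$-th lex-cut associated with $\bar x$. *)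

From mathcomp Require Import all_boot all_order all_algebra.
From mathcomp Require Import reals.
Set Implicit Arguments. Unset Strict Implicit. Unset Printing Implicit Defensive.
Import Order.TTheory GRing.Theory Num.Theory.
Local Open Scope ring_scope.

(* c i j = j-th coordinate of the integer vector c^{i+1} (0-based indices). *)

Definition lattice_basis (R : realType) (n : nat) (c : 'I_n -> 'I_n -> int) : Prop :=
  (forall lam : 'I_n -> R,
      (forall j : 'I_n, \sum_(i < n) lam i * (c i j)%:~R = 0) ->
      forall i, lam i = 0) /\
  (forall v : 'I_n -> int, exists lam : 'I_n -> int,
      forall j : 'I_n, v j = \sum_(i < n) lam i * c i j).

Definition cdot (R : realType) (n : nat) (c : 'I_n -> 'I_n -> int)
  (x : 'I_n -> R) (i : 'I_n) : R :=
  \sum_(j < n) (c i j)%:~R * x j.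

Definition intvec (R : realType) (n : nat) (z : 'I_n -> int) : 'I_n -> R :=
  fun j => (z j)%:~R.

Definition is_int_point (R : realType) (n : nat) (x : 'I_n -> R) : Prop :=
  exists z : 'I_n -> int, forall j, x j = (z j)%:~R.

Definition inK (R : realType) (n : nat) (c : 'I_n -> 'I_n -> int) (x : 'I_n -> R) : Prop :=
  forall i, 0 <= cdot c x i.

Definition lex_lt (R : realType) (n : nat) (c : 'I_n -> 'I_n -> int)
  (x y : 'I_n -> R) : Prop :=
  (exists j, x j <> y j) /\
  exists i : 'I_n, (forall i' : 'I_n, (i' < i)%N -> cdot c x i' = cdot c y i') /\
                   cdot c x i < cdot c y i.

Definition lex_ge (R : realType) (n : nat) (c : 'I_n -> 'I_n -> int)
  (x y : 'I_n -> R) : Prop :=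
  (forall j, x j = y j) \/ lex_lt c y x.

Definition conv_hull (R : realType) (n : nat) (S : ('I_n -> R) -> Prop)
  (x : 'I_n -> R) : Prop :=
  exists (m : nat) (w : 'I_m -> R) (p : 'I_m -> 'I_n -> R),
    (forall t, 0 <= w t) /\ \sum_(t < m) w t = 1 /\ (forall t, S (p t)) /\
    forall j, x j = \sum_(t < m) w t * p t j.

Definition Qset (R : realType) (n : nat) (c : 'I_n -> 'I_n -> int)
  (xbar : 'I_n -> R) : ('I_n -> R) -> Prop :=
  conv_hull (fun x => inK c x /\ is_int_point x /\ lex_ge c x xbar).

(* Coefficients d^k_i, with 0-based k, i (paper's k = k+1, i = i+1), i <= k:
   d^k_k = 1; d^k_{k-1} = c^k xbar; d^k_i = c^k xbar * prod_{i<j<k} (c^j xbar + 1). *)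
Definition dcoef (R : realType) (n : nat) (c : 'I_n -> 'I_n -> int)
  (xbar : 'I_n -> R) (k i : 'I_n) : R :=
  if i == k then 1
  else if (i.+1 == k)%N then cdot c xbar k
  else cdot c xbar k * \prod_(j < n | (i < j < k)%N) (cdot c xbar j + 1).

Definition lexcut_lhs (R : realType) (n : nat) (c : 'I_n -> 'I_n -> int)
  (xbar : 'I_n -> R) (k : 'I_n) (x : 'I_n -> R) : R :=
  \sum_(i < n | (i <= k)%N) dcoef c xbar k i * cdot c x i.

From mathcomp Require Import all_boot all_order all_algebra.
From mathcomp Require Import reals zify ring lra.
From Stdlib Require Import FunctionalExtensionality.
Set Implicit Arguments. Unset Strict Implicit. Unset Printing Implicit Defensive.
Import Order.TTheory GRing.Theory Num.Theory.
Local Open Scope ring_scope.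

(* Since the c^i form a lattice basis, the coordinates y_i = c^i x map Z^n
   onto itself; in them K is the nonnegative orthant, the order is the usual
   lexicographic one, and the k-th lex-cut reads sum_(i <= k) d^k_i y_i >=
   sum_(i <= k) d^k_i ybar_i.  The key identity is that d^k_1 is the value at
   ybar of the (k-1)-st cut of the problem obtained by dropping the first
   coordinate.
   Validity of the cuts: an integer point with y_1 = ybar_1 reduces to the
   smaller problem, and one with y_1 >= ybar_1 + 1 gains at least d^k_1 on
   the first term, which bounds what the (nonnegative) rest can lose.
   Completeness, by induction on n, with f = floor y_1 >= ybar_1: if
   f > ybar_1, y is a convex combination of the points (f, y_2, ...) and
   (f + 1, y_2, ...), whose tails are arbitrary points of the orthant; if
   f = ybar_1 and t = y_1 - ybar_1 < 1, then
   y = t (ybar_1 + 1, 0, ..., 0) + (1 - t) (ybar_1, y' / (1 - t)) with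
   y' = (y_2, ..., y_n), and by the key identity y' / (1 - t) satisfies the
   cuts of the smaller problem. *)

(* Points in the coordinates y are nat-indexed sequences, of which only the
   first n entries matter, so that the induction can drop the first one. *)
Section LexCuts.
Variable R : realType.

Definition tailf {T} (f : nat -> T) : nat -> T := fun i => f i.+1.

Definition intrf (z : nat -> int) : nat -> R := fun i => (z i)%:~R.

Definition lexcut_coef (yb : nat -> int) (k i : nat) : R :=
  if i == k then 1 else (yb k)%:~R * \prod_(i.+1 <= j < k) ((yb j)%:~R + 1).

Definition lexcut (yb : nat -> int) (k : nat) (y : nat -> R) : R :=
  \sum_(0 <= i < k.+1) lexcut_coef yb k i * y i.

Lemma lexcut_coef_ge0 yb k i : (forall j, 0 <= yb j) -> 0 <= lexcut_coef yb k i.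
Proof.
move=> yb_ge0; rewrite /lexcut_coef; case: ifP => // _.
apply: mulr_ge0; first by rewrite ler0z.
by apply: prodr_ge0 => j _; rewrite addr_ge0 ?ler0z.
Qed.

Lemma lexcut_coefS yb k i :
  lexcut_coef yb k.+1 i.+1 = lexcut_coef (tailf yb) k i.
Proof. by rewrite /lexcut_coef eqSS; case: ifP => // _; rewrite big_add1. Qed.

Lemma lexcut0 yb y : lexcut yb 0 y = y 0%N.
Proof. by rewrite /lexcut big_nat1 /lexcut_coef eqxx mul1r. Qed.

Lemma lexcutS yb k y :
  lexcut yb k.+1 y = lexcut_coef yb k.+1 0 * y 0%N + lexcut (tailf yb) k (tailf y).
Proof.
rewrite /lexcut big_nat_recl //; congr (_ + _).
by apply: eq_bigr => i _; rewrite lexcut_coefS.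
Qed.

(* Telescopes, since d_l = d_(l+1) (yb_(l+1) + 1) for l + 1 < k. *)
Lemma lexcut_coef_sum yb k l : (l < k)%N ->
  lexcut_coef yb k l = \sum_(l.+1 <= i < k.+1) lexcut_coef yb k i * (yb i)%:~R.
Proof.
move=> lt_lk; rewrite -(subnK lt_lk); move: (k - l.+1)%N => j.
elim: j l {lt_lk} => [|j IH] l.
  rewrite add0n big_nat1 /lexcut_coef eqxx mul1r (ltn_eqF (ltnSn l)).
  by rewrite big_geq ?mulr1.
rewrite big_ltn; last by lia.
rewrite addSnnS -IH /lexcut_coef.
have -> : (l == j + l.+2)%N = false by apply/eqP; lia.
have -> : (l.+1 == j + l.+2)%N = false by apply/eqP; lia.
by rewrite (@big_ltn _ _ _ l.+1); [ring | lia].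
Qed.

Lemma lexcut_coef_head yb k :
  lexcut_coef yb k.+1 0 = lexcut (tailf yb) k (intrf (tailf yb)).
Proof.
rewrite lexcut_coef_sum // /lexcut big_add1 /=.
by apply: eq_bigr => i _; rewrite lexcut_coefS.
Qed.

Lemma lexcut_ge0 yb k y : (forall j, 0 <= yb j) ->
  (forall i, (i <= k)%N -> 0 <= y i) -> 0 <= lexcut yb k y.
Proof.
move=> yb_ge0 y_ge0; rewrite /lexcut big_nat_cond.
apply: sumr_ge0 => i /andP[/andP[_ lt_ik] _].
by rewrite mulr_ge0 ?lexcut_coef_ge0 ?y_ge0.
Qed.

Lemma lexcut_divr yb k y s : lexcut yb k (fun i => y i / s) = lexcut yb k y / s.
Proof. by rewrite /lexcut mulr_suml; apply: eq_bigr => i _; rewrite mulrA. Qed.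

Lemma lexcut_comb yb k m (w : 'I_m -> R) (p : 'I_m -> nat -> R) y :
  (forall i, (i <= k)%N -> y i = \sum_(t < m) w t * p t i) ->
  lexcut yb k y = \sum_(t < m) w t * lexcut yb k (p t).
Proof.
move=> def_y; rewrite /lexcut big_nat_cond.
under eq_bigr => i /andP[/andP[_ lt_ik] _] do rewrite def_y // mulr_sumr.
rewrite exchange_big; apply: eq_bigr => t _; rewrite -big_nat_cond mulr_sumr.
by apply: eq_bigr => i _; rewrite mulrCA.
Qed.

Definition lex_geq (n : nat) (z yb : nat -> int) : Prop :=
  (forall i, (i < n)%N -> z i = yb i) \/
  exists l, [/\ (l < n)%N, (forall i, (i < l)%N -> z i = yb i) & yb l < z l].

Lemma lex_geqS n z yb : lex_geq n.+1 z yb <->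
  yb 0%N < z 0%N \/ z 0%N = yb 0%N /\ lex_geq n (tailf z) (tailf yb).
Proof.
split.
- case=> [eq_zyb | [[|l] [lt_ln eq_zyb lt_zyb]]].
  + by right; split; [exact: eq_zyb | left => i lt_in; exact: eq_zyb].
  + by left.
  + right; split; first exact: eq_zyb.
    by right; exists l; split => // i lt_il; exact: eq_zyb.
- case=> [lt_zyb | [eq0 [eq_zyb | [l [lt_ln eq_zyb lt_zyb]]]]].
  + by right; exists 0%N.
  + by left; case.
  + by right; exists l.+1; split => //; case.
Qed.

Lemma eq_lex_geq n z z' yb : (forall i, (i < n)%N -> z i = z' i) ->
  lex_geq n z yb -> lex_geq n z' yb.
Proof.
move=> eq_zz' [eq_zyb | [l [lt_ln eq_zyb lt_zyb]]].
  by left => i lt_in; rewrite -eq_zz' ?eq_zyb.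
right; exists l; rewrite -eq_zz' //; split=> // i lt_il.
by rewrite -eq_zz' ?eq_zyb //; apply: ltn_trans lt_ln.
Qed.

Theorem lexcut_lex_geq k n yb z : (forall j, 0 <= yb j) -> (k < n)%N ->
  (forall i, (i < n)%N -> 0 <= z i) -> lex_geq n z yb ->
  lexcut yb k (intrf yb) <= lexcut yb k (intrf z).
Proof.
elim: k n yb z => [|k IH] [//|n] yb z yb_ge0 lt_kn z_ge0 /lex_geqS z_geq.
  by rewrite !lexcut0 /intrf ler_int; case: z_geq => [/ltW | [->]].
rewrite !lexcutS lexcut_coef_head.
set beta := lexcut _ _ (intrf _).
have beta_ge0 : 0 <= beta.
  by apply: lexcut_ge0 => [j | i _]; rewrite /tailf /intrf ?ler0z; apply: yb_ge0.
case: z_geq => [lt_zyb | [eq0 z_geq]].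
- have rest_ge0 : 0 <= lexcut (tailf yb) k (tailf (intrf z)).
    apply: lexcut_ge0 => [j | i le_ik]; first exact: yb_ge0.
    by rewrite /tailf /intrf ler0z z_ge0 //; lia.
  have : (yb 0%N)%:~R + 1 <= (z 0%N)%:~R :> R.
    by move: lt_zyb; rewrite -lezD1 -(ler_int R) intrD.
  rewrite /intrf; nra.
- rewrite /intrf eq0 lerD2l.
  apply: IH z_geq => [j | // | i lt_in]; [exact: yb_ge0 | exact: z_ge0].
Qed.

Definition conv_int (n : nat) (S : (nat -> int) -> Prop) (y : nat -> R) : Prop :=
  exists m (w : 'I_m -> R) (p : 'I_m -> nat -> int),
    [/\ (forall t, 0 <= w t), \sum_(t < m) w t = 1, (forall t, S (p t)) &
     forall i, (i < n)%N -> y i = \sum_(t < m) w t * (p t i)%:~R].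

Lemma conv_int_point n (S : (nat -> int) -> Prop) p y : S p ->
  (forall i, (i < n)%N -> y i = (p i)%:~R) -> conv_int n S y.
Proof.
move=> Sp def_y; exists 1%N, (fun _ => 1), (fun _ => p).
by split=> [//||//|i lt_in]; rewrite big_ord1 ?mul1r ?def_y.
Qed.

Lemma conv_int_sub n (S S' : (nat -> int) -> Prop) y :
  conv_int n S y -> (forall p, S p -> S' p) -> conv_int n S' y.
Proof.
by move=> [m [w [p [? ? Sp ?]]]] sSS'; exists m, w, p; split=> // t; apply/sSS'.
Qed.

Lemma conv_int_comb n S a u v y : 0 <= a <= 1 -> conv_int n S u -> conv_int n S v ->
  (forall i, (i < n)%N -> y i = a * u i + (1 - a) * v i) -> conv_int n S y.
Proof.
move=> /andP[a_ge0 a_le1] [m1 [w1 [p1 [w1_ge0 w1_sum Sp1 def_u]]]]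
  [m2 [w2 [p2 [w2_ge0 w2_sum Sp2 def_v]]]] def_y.
exists (m1 + m2)%N,
  (fun t => match split t with inl t1 => a * w1 t1 | inr t2 => (1 - a) * w2 t2 end),
  (fun t => match split t with inl t1 => p1 t1 | inr t2 => p2 t2 end).
split.
- by move=> t; case: (split t) => t'; rewrite mulr_ge0 ?subr_ge0.
- rewrite big_split_ord /=.
  under eq_bigr do rewrite (unsplitK (inl _)).
  under [X in _ + X]eq_bigr do rewrite (unsplitK (inr _)).
  by rewrite -!mulr_sumr w1_sum w2_sum !mulr1 addrC subrK.
- by move=> t; case: (split t).
- move=> i lt_in; rewrite def_y // def_u // def_v // big_split_ord /=.
  under [X in _ = X + _]eq_bigr do rewrite (unsplitK (inl _)).
  under [X in _ = _ + X]eq_bigr do rewrite (unsplitK (inr _)).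
  by rewrite !mulr_sumr; congr (_ + _); apply: eq_bigr => t _; rewrite mulrA.
Qed.

Lemma conv_int_cons n S (a : int) y y' : conv_int n S y ->
  y' 0%N = a%:~R -> (forall i, (i < n)%N -> y' i.+1 = y i) ->
  conv_int n.+1 (fun p => p 0%N = a /\ S (tailf p)) y'.
Proof.
move=> [m [w [p [w_ge0 w_sum Sp def_y]]]] y'0 y'S.
exists m, w, (fun t i => if i is j.+1 then p t j else a).
split=> // [t | [|i] lt_in]; first by split; last exact: Sp.
  by rewrite y'0 -mulr_suml w_sum mul1r.
by rewrite y'S // def_y.
Qed.

Definition lexcone (n : nat) (yb p : nat -> int) : Prop :=
  (forall i, (i < n)%N -> 0 <= p i) /\ lex_geq n p yb.

Definition lexcut_poly (n : nat) (yb : nat -> int) (y : nat -> R) : Prop :=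
  (forall i, (i < n)%N -> 0 <= y i) /\
  (forall k, (k < n)%N -> lexcut yb k (intrf yb) <= lexcut yb k y).

Lemma lexcone_gt_head n yb p : 0 <= yb 0%N -> yb 0%N < p 0%N ->
  (forall i, (i < n)%N -> 0 <= p i.+1) -> lexcone n.+1 yb p.
Proof.
move=> yb0_ge0 lt_yp p_ge0; split; last by apply/lex_geqS; left.
by case=> [_ | i /p_ge0 //]; rewrite (le_trans yb0_ge0) ?ltW.
Qed.

Lemma lexcone_eq_head n yb p : 0 <= yb 0%N -> p 0%N = yb 0%N ->
  lexcone n (tailf yb) (tailf p) -> lexcone n.+1 yb p.
Proof.
move=> yb0_ge0 eq_py [p_ge0 p_geq]; split; last by apply/lex_geqS; right.
by case=> [_ | i /p_ge0 //]; rewrite eq_py.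
Qed.

Lemma lexcut_poly0 n y : (forall i, (i < n)%N -> 0 <= y i) ->
  lexcut_poly n (fun _ => 0) y.
Proof.
move=> y_ge0; split=> // k lt_kn.
rewrite [X in X <= _]big1 => [|i _]; last by rewrite /intrf mulr0.
by apply: lexcut_ge0 => // i le_ik; apply: y_ge0; lia.
Qed.

Lemma conv_lexcone_poly n yb y : (forall j, 0 <= yb j) ->
  conv_int n (lexcone n yb) y -> lexcut_poly n yb y.
Proof.
move=> yb_ge0 [m [w [p [w_ge0 w_sum p_cone def_y]]]]; split.
  move=> i lt_in; rewrite def_y //; apply: sumr_ge0 => t _.
  by rewrite mulr_ge0 ?ler0z //; case: (p_cone t) => p_ge0 _; apply: p_ge0.
move=> k lt_kn.
rewrite (@lexcut_comb _ _ _ w (fun t => intrf (p t)) y); last first.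
  by move=> i le_ik; apply: def_y; lia.
rewrite -[X in X <= _]mul1r -w_sum mulr_suml; apply: ler_sum => t _.
rewrite ler_wpM2l //; case: (p_cone t) => p_ge0 p_geq.
exact: lexcut_lex_geq p_geq.
Qed.

Section CompletenessStep.
Variable n : nat.
Hypothesis IH : forall yb y, (forall j, 0 <= yb j) -> lexcut_poly n yb y ->
  conv_int n (lexcone n yb) y.
Variables (yb : nat -> int) (y : nat -> R).
Hypotheses (yb_ge0 : forall j, 0 <= yb j) (y_poly : lexcut_poly n.+1 yb y).

Lemma conv_lexcone_floor_gt : yb 0%N < Num.floor (y 0%N) ->
  conv_int n.+1 (lexcone n.+1 yb) y.
Proof.
set f := Num.floor _ => lt_ybf.
have [y_ge0 _] := y_poly.
have tail_conv : conv_int n (lexcone n (fun _ => 0)) (tailf y).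
  by apply/IH/lexcut_poly0 => // i lt_in; apply: y_ge0.
have head_conv a : yb 0%N < a ->
    conv_int n.+1 (lexcone n.+1 yb) (fun i => if i is j.+1 then y j.+1 else a%:~R).
  move=> lt_yba; apply: (conv_int_sub (conv_int_cons tail_conv _ _)) => //.
  by move=> p [p0 [p_ge0 _]]; apply: lexcone_gt_head; rewrite ?p0.
have f_le : f%:~R <= y 0%N by apply: floor_le.
have lt_f1 : y 0%N < (f + 1)%:~R by apply: floorD1_gt.
apply: (@conv_int_comb _ _ ((f + 1)%:~R - y 0%N) _ _ _ _ (head_conv f lt_ybf)
          (head_conv (f + 1) _)).
- by rewrite intrD in lt_f1 *; apply/andP; split; lra.
- by rewrite (lt_le_trans lt_ybf) ?lerDl.
- by case=> [|i] _ /=; rewrite ?intrD; ring.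
Qed.

Lemma conv_lexcone_floor_eq : Num.floor (y 0%N) = yb 0%N ->
  conv_int n.+1 (lexcone n.+1 yb) y.
Proof.
move=> eq_fyb; have [y_ge0 y_cut] := y_poly.
have f_le : (yb 0%N)%:~R <= y 0%N by rewrite -eq_fyb floor_le.
have lt_f1 : y 0%N < (yb 0%N + 1)%:~R by rewrite -eq_fyb floorD1_gt.
rewrite intrD in lt_f1.
set th := y 0%N - (yb 0%N)%:~R.
have th_lt1 : 0 < 1 - th by rewrite /th; lra.
pose b i := tailf y i / (1 - th).
have b_conv : conv_int n (lexcone n (tailf yb)) b.
  apply: IH => [j | ]; first exact: yb_ge0.
  split=> [i lt_in | k lt_kn]; first by rewrite divr_ge0 ?y_ge0 ?ltW.
  have := y_cut k.+1 lt_kn; rewrite !lexcutS lexcut_coef_head /b lexcut_divr.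
  rewrite ler_pdivlMr // /th /intrf; nra.
apply: (@conv_int_comb _ _ th (fun i => if i is j.+1 then 0 else (yb 0%N + 1)%:~R)
          (fun i => if i is j.+1 then b j else (yb 0%N)%:~R)).
- by rewrite /th; apply/andP; split; lra.
- apply: (@conv_int_point _ _ (fun i => if i is j.+1 then 0 else yb 0%N + 1))
    => [|[]//].
  by apply: lexcone_gt_head; rewrite ?ltzD1 //.
- apply: (conv_int_sub (conv_int_cons b_conv _ _)) => // p [p0 p_cone].
  exact: lexcone_eq_head.
- case=> [|i] _ /=; first by rewrite intrD /th; ring.
  by rewrite /b mulr0 add0r mulrCA divff ?mulr1 ?gt_eqF.
Qed.

End CompletenessStep.

Theorem conv_lexcone_complete n yb y : (forall j, 0 <= yb j) ->
  lexcut_poly n yb y -> conv_int n (lexcone n yb) y.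
Proof.
elim: n yb y => [|n IH] yb y yb_ge0 y_poly.
  by apply: (@conv_int_point _ _ yb) => //; split=> //; left.
have : yb 0%N <= Num.floor (y 0%N).
  by rewrite floor_ge_int -(lexcut0 yb) -[_%:~R](lexcut0 yb (intrf yb)) y_poly.2.
rewrite le_eqVlt => /predU1P[/esym eq_fyb | lt_ybf].
- exact: conv_lexcone_floor_eq.
- exact: conv_lexcone_floor_gt.
Qed.

Theorem conv_lexconeE n yb y : (forall j, 0 <= yb j) ->
  conv_int n (lexcone n yb) y <-> lexcut_poly n yb y.
Proof.
by move=> yb_ge0; split; [apply: conv_lexcone_poly | apply: conv_lexcone_complete].
Qed.

End LexCuts.

Section Coordinates.
Variables (R : realType) (n : nat) (c : 'I_n -> 'I_n -> int).

Definition icoords (z : 'I_n -> int) : nat -> int :=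
  fun i => oapp (fun i => \sum_j c i j * z j) 0 (insub i).

Definition coords (x : 'I_n -> R) : nat -> R :=
  fun i => oapp (cdot c x) 0 (insub i).

Lemma icoords_ord z (i : 'I_n) : icoords z i = \sum_j c i j * z j.
Proof. by rewrite /icoords valK. Qed.

Lemma coords_ord x (i : 'I_n) : coords x i = cdot c x i.
Proof. by rewrite /coords valK. Qed.

Lemma cdot_intvec z i : cdot c (intvec R z) i = (icoords z i)%:~R.
Proof.
by rewrite icoords_ord /cdot rmorph_sum; apply: eq_bigr => j _; rewrite rmorphM.
Qed.

Lemma coords_intvec z : coords (intvec R z) = intrf R (icoords z).
Proof.
apply: functional_extensionality => i; rewrite /coords /icoords /intrf.
by case: insubP => [j _ _ | _] /=; rewrite -?icoords_ord ?cdot_intvec.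
Qed.

Lemma cdot_comb m (w : 'I_m -> R) (p : 'I_m -> 'I_n -> R) x :
  (forall j, x j = \sum_(t < m) w t * p t j) ->
  forall i, cdot c x i = \sum_(t < m) w t * cdot c (p t) i.
Proof.
move=> def_x i; rewrite /cdot.
under eq_bigr do rewrite def_x mulr_sumr.
rewrite exchange_big; apply: eq_bigr => t _; rewrite mulr_sumr.
by apply: eq_bigr => j _; rewrite mulrCA.
Qed.

Lemma dcoefE xbar k i :
  dcoef c (intvec R xbar) k i = lexcut_coef R (icoords xbar) k i.
Proof.
rewrite /dcoef /lexcut_coef -val_eqE cdot_intvec; case: ifP => // _.
case: ifP => [/eqP <- | _]; first by rewrite big_geq ?mulr1.
congr (_ * _); rewrite (big_nat_widenl _ 0) // (big_nat_widen 0 _ n) 1?ltnW //.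
rewrite big_mkord.
by apply: eq_big => [j | j _]; rewrite ?cdot_intvec.
Qed.

Lemma lexcut_lhsE xbar (k : 'I_n) x :
  lexcut_lhs c (intvec R xbar) k x = lexcut (icoords xbar) k (coords x).
Proof.
rewrite /lexcut_lhs /lexcut (big_nat_widen 0 k.+1 n) // big_mkord.
by apply: eq_big => [i | i _]; rewrite ?ltnS // dcoefE coords_ord.
Qed.

Lemma icoords_ge0 z : inK c (intvec R z) -> forall i, 0 <= icoords z i.
Proof.
move=> z_K i; rewrite /icoords; case: insubP => [j _ _ | _] //=.
by rewrite -(ler0z R) -icoords_ord -cdot_intvec.
Qed.

Lemma lexcut_polyE xbar x :
  lexcut_poly n (icoords xbar) (coords x) <->
  (forall i, 0 <= cdot c x i) /\
  (forall k : 'I_n, lexcut_lhs c (intvec R xbar) k (intvec R xbar) <=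
                    lexcut_lhs c (intvec R xbar) k x).
Proof.
rewrite /lexcut_poly; split=> [[x_ge0 x_cut] | [x_ge0 x_cut]]; split.
- by move=> i; rewrite -coords_ord x_ge0.
- by move=> k; rewrite !lexcut_lhsE coords_intvec x_cut.
- by move=> i lt_in; have := x_ge0 (Ordinal lt_in); rewrite -coords_ord.
- by move=> k lt_kn; have := x_cut (Ordinal lt_kn); rewrite !lexcut_lhsE coords_intvec.
Qed.

Hypothesis c_basis : lattice_basis R c.

Lemma lattice_basis_inverse : exists L : 'I_n -> 'I_n -> int,
  (forall j k, \sum_i L j i * c i k = (j == k)%:R) /\
  (forall i k, \sum_j c i j * L j k = (i == k)%:R).
Proof.
have /fin_all_exists[L L_c] : forall j : 'I_n, exists lam : 'I_n -> int,
    forall k, \sum_i lam i * c i k = (j == k)%:R.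
  move=> j; have [lam def_lam] := c_basis.2 (fun k => (j == k)%:R).
  by exists lam => k; rewrite def_lam.
exists L; split=> // i k.
have LC1 : \matrix_(j, i) L j i *m \matrix_(i, k) c i k = 1%:M.
  by apply/matrixP => j k'; rewrite !mxE -L_c; apply: eq_bigr => i' _; rewrite !mxE.
have := congr1 (fun M : 'M[int]_n => M i k) (mulmx1C LC1); rewrite !mxE => <-.
by apply: eq_bigr => j _; rewrite !mxE.
Qed.

Lemma cdot_inj (x y : 'I_n -> R) :
  (forall i, cdot c x i = cdot c y i) -> forall j, x j = y j.
Proof.
have [L [L_c _]] := lattice_basis_inverse.
suff cdotK (z : 'I_n -> R) j : z j = \sum_k (L j k)%:~R * cdot c z k.
  by move=> eq_xy j; rewrite cdotK [RHS]cdotK; apply: eq_bigr => k _; rewrite eq_xy.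
rewrite /cdot; under eq_bigr do rewrite mulr_sumr.
rewrite exchange_big /=.
under eq_bigr => i _.
  rewrite (eq_bigr (fun k => (L j k * c k i)%:~R * z i)) => [|k _]; last first.
    by rewrite rmorphM mulrA.
  rewrite -mulr_suml -rmorph_sum L_c rmorph_nat.
  over.
rewrite (bigD1 j) //= eqxx mul1r big1 ?addr0 // => i /negbTE neq_ij.
by rewrite eq_sym neq_ij mul0r.
Qed.

Lemma icoords_onto : exists lift : (nat -> int) -> 'I_n -> int,
  forall q (i : 'I_n), icoords (lift q) i = q i.
Proof.
have [L [_ c_L]] := lattice_basis_inverse.
exists (fun (q : nat -> int) j => \sum_(k < n) L j k * q k) => q i.
rewrite icoords_ord; under eq_bigr do rewrite mulr_sumr.
rewrite exchange_big /=.
under eq_bigr => k _.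
  rewrite (eq_bigr (fun j => c i j * L j k * q k)) => [|j _]; last by rewrite mulrA.
  rewrite -mulr_suml c_L.
  over.
rewrite (bigD1 i) //= eqxx mul1r big1 ?addr0 // => k /negbTE neq_ki.
by rewrite eq_sym neq_ki mul0r.
Qed.

Lemma lex_geE z zb :
  lex_ge c (intvec R z) (intvec R zb) <-> lex_geq n (icoords z) (icoords zb).
Proof.
split.
- case=> [eq_z | [_ [i [eq_lt lt_i]]]].
    left => i lt_in; apply: (@intr_inj R); rewrite -!(cdot_intvec _ (Ordinal lt_in)).
    by apply: eq_bigr => j _; rewrite eq_z.
  right; exists i; split=> [//| i' lt_i'i |]; last first.
    by rewrite -(ltr_int R) -!cdot_intvec.
  have lt_i'n := ltn_trans lt_i'i (ltn_ord i).
  by apply: (@intr_inj R); rewrite -!(cdot_intvec _ (Ordinal lt_i'n)) eq_lt.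
- case=> [eq_z | [l [lt_ln eq_lt lt_l]]].
    left; apply: cdot_inj => i; rewrite !cdot_intvec eq_z //.
  right; split.
    have /existsP[j /eqP neq_j] : [exists j, zb j != z j].
      apply: contraTT lt_l => /existsPn eq_zb.
      suff -> : zb = z by rewrite ltxx.
      by apply: functional_extensionality => j; apply/eqP/negPn/eq_zb.
    by exists j; rewrite /intvec => /intr_inj.
  exists (Ordinal lt_ln); split=> [i' lt_i'l |]; last by rewrite !cdot_intvec ltr_int.
  by rewrite !cdot_intvec eq_lt.
Qed.

Lemma QsetE xbar x :
  Qset c (intvec R xbar) x <-> conv_int n (lexcone n (icoords xbar)) (coords x).
Proof.
split.
- move=> [m [w [p [w_ge0 [w_sum [p_in def_x]]]]]].
  have /fin_all_exists[z def_z] : forall t, exists z, p t = intvec R z.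
    move=> t; have [_ [[z def_z] _]] := p_in t.
    by exists z; apply: functional_extensionality.
  exists m, w, (fun t => icoords (z t)); split=> // [t | i lt_in].
    have [p_K [_ p_geq]] := p_in t; rewrite def_z in p_K p_geq.
    by split=> [i _ | ]; [apply: icoords_ge0 | apply/lex_geE].
  rewrite -[i]/(val (Ordinal lt_in)) coords_ord (cdot_comb def_x).
  by apply: eq_bigr => t _; rewrite def_z cdot_intvec.
- move=> [m [w [q [w_ge0 w_sum q_cone def_x]]]].
  have [lift liftK] := icoords_onto.
  exists m, w, (fun t => intvec R (lift (q t))); split=> //; split=> //; split.
    move=> t; have [q_ge0 q_geq] := q_cone t; split; last split.
    + by move=> i; rewrite cdot_intvec liftK ler0z q_ge0.
    + by exists (lift (q t)).
    + apply/lex_geE; apply: eq_lex_geq q_geq => i lt_in.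
      by rewrite -(liftK _ (Ordinal lt_in)).
  apply: cdot_inj => i.
  rewrite [RHS](@cdot_comb _ w (fun t => intvec R (lift (q t)))) //.
  by rewrite -coords_ord def_x //; apply: eq_bigr => t _; rewrite cdot_intvec liftK.
Qed.

End Coordinates.

Theorem proposition1 (R : realType) (n : nat) (c : 'I_n -> 'I_n -> int)
  (xbar : 'I_n -> int) :
  lattice_basis R c ->
  inK c (intvec R xbar) ->
  (exists j, xbar j != 0) ->
  forall x : 'I_n -> R,
    Qset c (intvec R xbar) x <->
    (forall i, 0 <= cdot c x i) /\
    (forall k : 'I_n, lexcut_lhs c (intvec R xbar) k x >=
                      lexcut_lhs c (intvec R xbar) k (intvec R xbar)).
Proof.
move=> c_basis xbar_K _ x.
apply: (iff_trans (QsetE c_basis xbar x)).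
apply: (iff_trans (conv_lexconeE _ _ (icoords_ge0 xbar_K))).
exact: lexcut_polyE.
Qed.
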